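(* Let $(\mathbf{L},\mathbf{R})\in\mathcal{P}_{\mathsf N}$ be superbalanced and suppose it admits a contraction map. Then for all $i,j\in[\mathsf N+1]$, the null reduction on $i$ of the purification on $j$ of $(\mathbf{L},\mathbf{R})$ admits a contraction map (or is empty).
   Context: $\mathcal{P}_{\mathsf N}$ denotes the set of pairs $(\mathbf{L},\mathbf{R})$ of $(0,1)$-matrices, $\mathbf{L}$ of size $(\mathsf N+1)\times m_L$ and $\mathbf{R}$ of size $(\mathsf N+1)\times m_R$, such that some index $p\in[\mathsf N+1]$ has row $p$ of $\mathbf{L}$ and row $p$ of $\mathbf{R}$ both zero. $\mathbf{A}_{(i)}$ denotes the $i$-th row of $\mathbf{A}$; $e$ is the all-ones row vector; $|x-x'|$ is the Hamming distance of bit strings. A contraction map for $(\mathbf{L},\mathbf{R})$ is a map $f:\{0,1\}^{m_L}\to\{0,1\}^{m_R}$ with $f(\mathbf{L}_{(i)})=\mathbf{R}_{(i)}$ for all $i$ and $|x-x'|\ge|f(x)-f(x')|$ for all $x,x'$. The pair is superbalanced if $\mathbf{L}_{(i)}\cdot\mathbf{L}_{(j)}=\mathbf{R}_{(i)}\cdot\mathbf{R}_{(j)}$ for all $i,j$. The purification on $j$ of $(\mathbf{L},\mathbf{R})$ is the pair $(\mathbf{L}+_2 e^T\mathbf{L}_{(j)},\ \mathbf{R}+_2 e^T\mathbf{R}_{(j)})$, where $+_2$ is entrywise addition mod 2; i.e. every column of $\mathbf{L}$ (resp. $\mathbf{R}$) with a $1$ in row $j$ is bit-flipped entirely, and other columns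 are unchanged (row $j$ becomes zero in both). The null reduction on $i$ of a pair keeps exactly the columns of each matrix that have a $1$ in row $i$. *)

(* (0,1)-matrices are boolean matrices 'M[bool]_(n, m);
   bit strings in {0,1}^m are row vectors 'rV[bool]_m. *)
From mathcomp Require Import all_boot all_algebra.
Set Implicit Arguments. Unset Strict Implicit. Unset Printing Implicit Defensive.

Definition hamming (m : nat) (x y : 'rV[bool]_m) : nat :=
  #|[set k : 'I_m | x ord0 k != y ord0 k]|.

Definition is_contraction_map (n mL mR : nat)
  (L : 'M[bool]_(n, mL)) (R : 'M[bool]_(n, mR))
  (f : 'rV[bool]_mL -> 'rV[bool]_mR) : Prop :=
  (forall i : 'I_n, f (row i L) = row i R) /\
  (forall x x' : 'rV[bool]_mL, hamming (f x) (f x') <= hamming x x').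

Definition admits_contraction_map (n mL mR : nat)
  (L : 'M[bool]_(n, mL)) (R : 'M[bool]_(n, mR)) : Prop :=
  exists f, is_contraction_map L R f.

Definition in_P (N mL mR : nat)
  (L : 'M[bool]_(N.+1, mL)) (R : 'M[bool]_(N.+1, mR)) : Prop :=
  exists p : 'I_N.+1, (forall k, L p k = false) /\ (forall k, R p k = false).

Definition rowdot (n m : nat) (A : 'M[bool]_(n, m)) (i j : 'I_n) : nat :=
  #|[set k : 'I_m | A i k && A j k]|.

Definition superbalanced (n mL mR : nat)
  (L : 'M[bool]_(n, mL)) (R : 'M[bool]_(n, mR)) : Prop :=
  forall i j : 'I_n, rowdot L i j = rowdot R i j.

(* A +_2 e^T A_(j) : every column with a 1 in row j is bit-flipped. *)
Definition purify (n m : nat) (j : 'I_n) (A : 'M[bool]_(n, m)) : 'M[bool]_(n, m) :=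
  \matrix_(r, k) (A r k (+) A j k).

Definition null_cols (n m : nat) (i : 'I_n) (A : 'M[bool]_(n, m)) : {set 'I_m} :=
  [set k | A i k].

(* Null reduction on i: keep exactly the columns with a 1 in row i
   (in their original order). *)
Definition null_reduce (n m : nat) (i : 'I_n) (A : 'M[bool]_(n, m))
  : 'M[bool]_(n, #|null_cols i A|) :=
  \matrix_(r, k) A r (enum_val k).

From mathcomp Require Import all_boot all_algebra.
From mathcomp Require Import zify.
Set Implicit Arguments. Unset Strict Implicit. Unset Printing Implicit Defensive.

(* Purifying on j turns row j into zero rows of both matrices and keeps the pair
   superbalanced, and conjugating a contraction map by the translations
   x |-> x + L_(j), y |-> y + R_(j) gives a contraction map of the purified pair.
   So we may assume rows j vanish, i.e. f(0) = 0 and weights do not increase.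
   If supp x is contained in row i of L, then comparing d(f x, 0) <= |x| and
   d(f x, R_(i)) <= |L_(i)| - |x| with |R_(i)| = |L_(i)| forces supp (f x) to be
   contained in R_(i) and to have weight |x|.  Hence f maps the meet L_(r) /\ L_(i)
   to a subset of R_(r) /\ R_(i) of the same weight, which by superbalance is the
   meet itself.  Null reduction on i amounts to restricting to these meets, so
   f, extended by zeros and restricted to the kept columns, contracts the reduced
   pair. *)

Definition supp m (x : 'rV[bool]_m) : {set 'I_m} := [set k | x ord0 k].

Lemma supp_inj m : injective (@supp m).
Proof.
move=> x y /setP exy; apply/rowP=> k.
by have := exy k; rewrite !inE.
Qed.

Lemma hamming_supp m (x y : 'rV[bool]_m) :
  hamming x y + 2 * #|supp x :&: supp y| = #|supp x| + #|supp y|.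
Proof.
have card_sum (P : pred 'I_m) : #|[set k | P k]| = \sum_k (P k : nat).
  by rewrite -sum1_card big_mkcond; apply: eq_bigr => k _; rewrite inE; case: (P k).
rewrite /hamming /supp.
have -> : [set k | x ord0 k] :&: [set k | y ord0 k] = [set k | x ord0 k && y ord0 k].
  by apply/setP=> k; rewrite !inE.
rewrite !card_sum big_distrr -!big_split; apply: eq_bigr => k _.
by case: (x ord0 k); case: (y ord0 k).
Qed.

Lemma hamming_supp0 m (x y : 'rV[bool]_m) :
  supp y = set0 -> hamming x y = #|supp x|.
Proof. by move=> y0; have := hamming_supp x y; rewrite y0 setI0 cards0; lia. Qed.

Lemma rowdotE n m (A : 'M[bool]_(n, m)) (r s : 'I_n) :
  rowdot A r s = #|supp (row r A) :&: supp (row s A)|.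
Proof. by apply: eq_card => k; rewrite !inE !mxE. Qed.

Lemma rowdot_diag n m (A : 'M[bool]_(n, m)) (r : 'I_n) :
  rowdot A r r = #|supp (row r A)|.
Proof. by rewrite rowdotE setIid. Qed.

Definition xorv m (x c : 'rV[bool]_m) : 'rV[bool]_m := \row_k (x ord0 k (+) c ord0 k).

Lemma xorvK m (c : 'rV[bool]_m) : involutive (fun x => xorv x c).
Proof. by move=> x; apply/rowP=> k; rewrite !mxE addbK. Qed.

Lemma hamming_xorv m (x y c : 'rV[bool]_m) : hamming (xorv x c) (xorv y c) = hamming x y.
Proof.
by apply: eq_card => k; rewrite !inE !mxE; case: (x ord0 k); case: (y ord0 k); case: (c ord0 k).
Qed.

Lemma card_supp_xorv m (x c : 'rV[bool]_m) : #|supp (xorv x c)| = hamming x c.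
Proof. by apply: eq_card => k; rewrite !inE mxE; case: (x ord0 k); case: (c ord0 k). Qed.

Definition andv m (x y : 'rV[bool]_m) : 'rV[bool]_m := \row_k (x ord0 k && y ord0 k).

Lemma supp_andv m (x y : 'rV[bool]_m) : supp (andv x y) = supp x :&: supp y.
Proof. by apply/setP=> k; rewrite !inE mxE. Qed.

Section Purification.

Variables (n : nat) (j : 'I_n).

Lemma row_purify m (A : 'M[bool]_(n, m)) (r : 'I_n) :
  row r (purify j A) = xorv (row r A) (row j A).
Proof. by apply/rowP=> k; rewrite !mxE. Qed.

Lemma supp_row_purify_self m (A : 'M[bool]_(n, m)) : supp (row j (purify j A)) = set0.
Proof. by apply/setP=> k; rewrite !inE !mxE addbb. Qed.

(* Every rowdot of the purified matrix is an integer combination of rowdots of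
   the original one, via hamming_supp. *)
Lemma superbalanced_purify mA mB (A : 'M[bool]_(n, mA)) (B : 'M[bool]_(n, mB)) :
  superbalanced A B -> superbalanced (purify j A) (purify j B).
Proof.
move=> sbAB r s; rewrite !rowdotE !row_purify.
have := hamming_supp (xorv (row r A) (row j A)) (xorv (row s A) (row j A)).
have := hamming_supp (xorv (row r B) (row j B)) (xorv (row s B) (row j B)).
rewrite !hamming_xorv !card_supp_xorv.
have := hamming_supp (row r A) (row s A); have := hamming_supp (row r B) (row s B).
have := hamming_supp (row r A) (row j A); have := hamming_supp (row r B) (row j B).
have := hamming_supp (row s A) (row j A); have := hamming_supp (row s B) (row j B).
move: (sbAB r s) (sbAB r j) (sbAB s j) (sbAB r r) (sbAB s s) (sbAB j j).
rewrite !rowdotE !setIid; lia.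
Qed.

Lemma contraction_purify mA mB (A : 'M[bool]_(n, mA)) (B : 'M[bool]_(n, mB)) f :
  is_contraction_map A B f ->
  is_contraction_map (purify j A) (purify j B)
    (fun x => xorv (f (xorv x (row j A))) (row j B)).
Proof.
move=> [f_rows f_contr]; split=> [r | x x'].
  by rewrite !row_purify xorvK f_rows.
by rewrite hamming_xorv; apply: leq_trans (f_contr _ _) _; rewrite hamming_xorv.
Qed.

End Purification.

Section Restriction.

Variables (m : nat) (S : {set 'I_m}).

Definition restrict (x : 'rV[bool]_m) : 'rV[bool]_#|S| := \row_t x ord0 (enum_val t).

Definition extend0 (y : 'rV[bool]_#|S|) : 'rV[bool]_m :=
  \row_k [exists t, (enum_val t == k) && y ord0 t].

Lemma extend0E y t : extend0 y ord0 (enum_val t) = y ord0 t.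
Proof.
rewrite mxE; apply/existsP/idP => [[t' /andP [/eqP /enum_val_inj -> //]] | yt].
by exists t; rewrite eqxx.
Qed.

Lemma extend0_notin y k : k \notin S -> extend0 y ord0 k = false.
Proof.
move=> kS; rewrite mxE; apply/existsP => -[t /andP [/eqP tk _]].
by move: (enum_valP t); rewrite tk (negbTE kS).
Qed.

Lemma hamming_restrict x x' : hamming (restrict x) (restrict x') <= hamming x x'.
Proof.
rewrite /hamming -(card_imset _ (@enum_val_inj _ (mem S))).
apply: subset_leq_card; apply/subsetP=> k /imsetP [t].
by rewrite !inE !mxE => xx't ->.
Qed.

Lemma hamming_extend0 y y' : hamming (extend0 y) (extend0 y') <= hamming y y'.
Proof.
rewrite /hamming; apply: leq_trans (leq_imset_card (@enum_val _ (mem S)) _).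
apply: subset_leq_card; apply/subsetP=> k; rewrite inE.
have [kS | kS] := boolP (k \in S); last by rewrite !extend0_notin.
rewrite -(enum_rankK_in kS kS) !extend0E => yy'k.
by apply/imsetP; exists (enum_rank_in kS k); rewrite ?inE.
Qed.

End Restriction.

Section NullReduction.

Variables (n m : nat) (i : 'I_n) (A : 'M[bool]_(n, m)).

Lemma row_null_reduce r : row r (null_reduce i A) = restrict (null_cols i A) (row r A).
Proof. by apply/rowP=> t; rewrite !mxE. Qed.

Lemma extend0_restrict_null_cols x :
  extend0 (restrict (null_cols i A) x) = andv x (row i A).
Proof.
apply/rowP=> k; rewrite [RHS]mxE [row _ _ _ _]mxE.
have [kS | kS] := boolP (k \in null_cols i A).
  rewrite -(enum_rankK_in kS kS) extend0E mxE.
  by move: (enum_valP (enum_rank_in kS k)); rewrite inE => ->; rewrite andbT.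
by rewrite extend0_notin //; move: kS; rewrite inE => /negbTE ->; rewrite andbF.
Qed.

Lemma restrict_null_cols_andv x :
  restrict (null_cols i A) (andv x (row i A)) = restrict (null_cols i A) x.
Proof.
apply/rowP=> t; rewrite !mxE.
by move: (enum_valP t); rewrite inE => ->; rewrite andbT.
Qed.

End NullReduction.

Section ContractionOnMeets.

Variables (n mA mB : nat) (A : 'M[bool]_(n, mA)) (B : 'M[bool]_(n, mB)).
Variables (g : 'rV[bool]_mA -> 'rV[bool]_mB) (j : 'I_n).
Hypothesis sbAB : superbalanced A B.
Hypothesis g_contr : is_contraction_map A B g.
Hypothesis A_j0 : supp (row j A) = set0.
Hypothesis B_j0 : supp (row j B) = set0.

Lemma contraction_card_supp_le x : #|supp (g x)| <= #|supp x|.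
Proof.
have := (proj2 g_contr) x (row j A).
by rewrite (proj1 g_contr) !hamming_supp0.
Qed.

Lemma contraction_supp_sub_row x (i : 'I_n) :
  supp x \subset supp (row i A) ->
  supp (g x) \subset supp (row i B) /\ #|supp (g x)| = #|supp x|.
Proof.
move=> /setIidPl xi.
have := (proj2 g_contr) x (row i A); rewrite (proj1 g_contr).
have := hamming_supp x (row i A); have := hamming_supp (g x) (row i B).
have := contraction_card_supp_le x.
have := subset_leq_card (subsetIl (supp (g x)) (supp (row i B))).
move: (sbAB i i); rewrite !rowdot_diag xi => ABi ? ? ? ? ?.
have gx_i : #|supp (g x) :&: supp (row i B)| = #|supp (g x)| by lia.
split; last by lia.
by apply/setIidPl/eqP; rewrite eqEcard subsetIl gx_i leqnn.
Qed.

Lemma contraction_andv_rows (r i : 'I_n) :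
  g (andv (row r A) (row i A)) = andv (row r B) (row i B).
Proof.
set z := andv _ _; apply: supp_inj; rewrite supp_andv.
have zr : supp z \subset supp (row r A) by rewrite supp_andv subsetIl.
have zi : supp z \subset supp (row i A) by rewrite supp_andv subsetIr.
have [[gr card_gz] [gi _]] := (contraction_supp_sub_row zr, contraction_supp_sub_row zi).
apply/eqP; rewrite eqEcard subsetI gr gi card_gz.
by rewrite /z supp_andv -!rowdotE sbAB leqnn.
Qed.

Lemma null_reduce_contraction (i : 'I_n) :
  admits_contraction_map (null_reduce i A) (null_reduce i B).
Proof.
exists (fun y => restrict (null_cols i B) (g (extend0 y))); split=> [r | y y'].
  by rewrite !row_null_reduce extend0_restrict_null_cols contraction_andv_rows
    restrict_null_cols_andv.
apply: leq_trans (hamming_restrict _ _ _) _.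
by apply: leq_trans (proj2 g_contr _ _) _; apply: hamming_extend0.
Qed.

End ContractionOnMeets.

Theorem corollary1 (N mL mR : nat)
  (L : 'M[bool]_(N.+1, mL)) (R : 'M[bool]_(N.+1, mR)) :
  in_P L R ->
  superbalanced L R ->
  admits_contraction_map L R ->
  forall i j : 'I_N.+1,
    admits_contraction_map (null_reduce i (purify j L)) (null_reduce i (purify j R))
    \/ (#|null_cols i (purify j L)| = 0 /\ #|null_cols i (purify j R)| = 0).
Proof.
(* Purification already produces the zero row that membership in P_N provides. *)
move=> _ sbLR [f f_contr] i j; left.
apply: (null_reduce_contraction (superbalanced_purify j sbLR)
  (contraction_purify j f_contr)); exact: supp_row_purify_self.
Qed.
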